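(* The function $Q:Z_0\to\mathbb{R}$, $Q(z)=\lambda_{\max}(M(z))$, is convex.
   Context: Let $n\ge2$, $\mathcal S_0^{n\times n}$ the trace-free symmetric matrices, $Z:=\mathbb{R}\times\mathbb{R}^n\times\mathbb{R}^n\times\mathcal S_0^{n\times n}\times\mathbb{R}$ with elements $z=(\rho,v,m,\sigma,p)$, $Z_0:=\{z\in Z:\rho\in(-1,1)\}$ (a convex set). For $z\in Z_0$, $M(z):=\frac{v\otimes v-\rho(m\otimes v+v\otimes m)+m\otimes m}{1-\rho^2}-\sigma$ and $\lambda_{\max}$ denotes the maximal eigenvalue of a symmetric matrix. *)

From HB Require Import structures.
From mathcomp Require Import all_boot all_order all_algebra.
From mathcomp Require Import boolp classical_sets reals.
Set Implicit Arguments. Unset Strict Implicit. Unset Printing Implicit Defensive.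
Import Order.TTheory GRing.Theory Num.Theory.
Local Open Scope ring_scope.
Local Open Scope classical_set_scope.

(* Z = R x R^n x R^n x S_0^{nxn} x R ; points are tuples (rho, v, m, sigma, p),
   vectors in R^n are column vectors 'cV_n, sigma is an n x n matrix which
   is required (in Z0) to be symmetric and trace-free. *)
Definition Zpt (R : realType) (n : nat) : Type :=
  (R * 'cV[R]_n * 'cV[R]_n * 'M[R]_n * R)%type.

Definition zrho (R : realType) (n : nat) (z : Zpt R n) : R := z.1.1.1.1.
Definition zv (R : realType) (n : nat) (z : Zpt R n) : 'cV[R]_n := z.1.1.1.2.
Definition zm (R : realType) (n : nat) (z : Zpt R n) : 'cV[R]_n := z.1.1.2.
Definition zsigma (R : realType) (n : nat) (z : Zpt R n) : 'M[R]_n := z.1.2.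
Definition zp (R : realType) (n : nat) (z : Zpt R n) : R := z.2.

Definition inZ0 (R : realType) (n : nat) (z : Zpt R n) : Prop :=
  [/\ -1 < zrho z < 1, (zsigma z)^T = zsigma z & \tr (zsigma z) = 0].

Definition zcomb (R : realType) (n : nat) (t : R) (z1 z2 : Zpt R n) : Zpt R n :=
  (t * zrho z1 + (1 - t) * zrho z2,
   t *: zv z1 + (1 - t) *: zv z2,
   t *: zm z1 + (1 - t) *: zm z2,
   t *: zsigma z1 + (1 - t) *: zsigma z2,
   t * zp z1 + (1 - t) * zp z2).

Definition otimes (R : realType) (n : nat) (a b : 'cV[R]_n) : 'M[R]_n := a *m b^T.

Definition Mz (R : realType) (n : nat) (z : Zpt R n) : 'M[R]_n :=
  (1 - zrho z ^+ 2)^-1 *: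
    (otimes (zv z) (zv z)
     - zrho z *: (otimes (zm z) (zv z) + otimes (zv z) (zm z))
     + otimes (zm z) (zm z))
  - zsigma z.

Definition lambda_max (R : realType) (n : nat) (A : 'M[R]_n) : R := sup [set a : R | eigenvalue A a].

Definition Q (R : realType) (n : nat) (z : Zpt R n) : R := lambda_max (Mz z).

From HB Require Import structures.
From mathcomp Require Import all_boot all_order all_algebra.
From mathcomp Require Import reals.
From mathcomp.real_closed Require Import complex.
From mathcomp Require Import ring lra.
Import Order.TTheory GRing.Theory Num.Theory.
Local Open Scope ring_scope.

(* For a symmetric matrix M, lambda_max M is an eigenvalue and x M x^T <= lambda_max M * |x|^2
   for every row vector x; this Rayleigh bound comes from the spectral theorem for the
   Hermitian complexification of M.  Let u be an eigenvector of M(z_t) for lambda_max, where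
   z_t := t z1 + (1 - t) z2.  The map z |-> u M(z) u^T is F(rho, u v, u m) - u sigma u^T with
   F(rho, a, b) = (a^2 - 2 rho a b + b^2) / (1 - rho^2)
                = (a + b)^2 / (2 (1 + rho)) + (a - b)^2 / (2 (1 - rho)),
   a sum of perspectives of the square, hence convex on Z0.  Therefore
   lambda_max M(z_t) |u|^2 = u M(z_t) u^T <= t u M(z1) u^T + (1 - t) u M(z2) u^T
                          <= (t lambda_max M(z1) + (1 - t) lambda_max M(z2)) |u|^2. *)

Definition qform {R : pzRingType} {n} (x : 'rV[R]_n) (A : 'M[R]_n) : R :=
  (x *m A *m x^T) 0 0.

Section QuadraticForm.
Context {R : realFieldType} {n : nat}.
Implicit Types (x : 'rV[R]_n) (A B : 'M[R]_n).

Lemma qform_norm_gt0 x : x != 0 -> 0 < qform x 1%:M.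
Proof.
move=> x_neq0; rewrite /qform mulmx1 mxE.
under eq_bigr => j _ do rewrite mxE -expr2.
rewrite lt_def sumr_ge0 ?andbT => [|j _]; last exact: sqr_ge0.
apply: contra x_neq0 => /eqP /psumr_eq0P sq0; apply/eqP/rowP => j.
by apply/eqP; rewrite mxE -sqrf_eq0 sq0 // => i _; exact: sqr_ge0.
Qed.

Lemma qform_eigen x A a : x *m A = a *: x -> qform x A = a * qform x 1%:M.
Proof. by move=> xA; rewrite /qform xA mulmx1 -scalemxAl mxE. Qed.

Lemma eigenvalue_le_rayleigh A r a :
  (forall x, qform x A <= r * qform x 1%:M) -> eigenvalue A a -> a <= r.
Proof.
move=> rayleigh /eigenvalueP [x xA x_neq0].
by rewrite -(ler_pM2r (qform_norm_gt0 x x_neq0)) -(qform_eigen _ _ _ xA) rayleigh.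
Qed.

Lemma qformD x A B : qform x (A + B) = qform x A + qform x B.
Proof. by rewrite /qform mulmxDr mulmxDl mxE. Qed.

Lemma qformB x A B : qform x (A - B) = qform x A - qform x B.
Proof. by rewrite /qform mulmxBr mulmxBl !mxE. Qed.

Lemma qformZ x c A : qform x (c *: A) = c * qform x A.
Proof. by rewrite /qform -scalemxAr -scalemxAl mxE. Qed.

Lemma qform_otimes x (a b : 'cV[R]_n) :
  qform x (a *m b^T) = (x *m a) 0 0 * (x *m b) 0 0.
Proof.
by rewrite /qform mulmxA -mulmxA -trmx_mul mxE big_ord1 [_^T _ _]mxE.
Qed.

End QuadraticForm.

Section HermitianSpectral.
Context {C : numClosedFieldType}.
Local Open Scope sesquilinear_scope.

Lemma spectral_diag_eigenvalue n (A : 'M[C]_n) i :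
  A \is normalmx -> eigenvalue A (spectral_diag A 0 i).
Proof.
move=> /orthomx_spectralP; set P := spectralmx A; set d := spectral_diag A.
move=> A_eq; have P_unit : P \in unitmx := spectral_unit A.
apply/eigenvalueP; exists (row i P).
  rewrite -row_mul {1}A_eq !mulmxA mulmxV // mul1mx mul_diag_mx.
  by apply/rowP => j; rewrite !mxE.
apply/eqP => Pi0.
have := congr1 (row i) (mulmxV P_unit).
rewrite row_mul Pi0 mul0mx => /rowP /(_ i).
by rewrite !mxE eqxx /= => /eqP; rewrite eq_sym oner_eq0.
Qed.

Lemma hermitian_rayleigh n (A : 'M[C]_n) (r : C) (x : 'rV_n) :
  A \is hermsymmx -> (forall i, spectral_diag A 0 i <= r) ->
  (x *m A *m x^t*) 0 0 <= r * (x *m x^t*) 0 0.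
Proof.
move=> A_herm d_le.
have /orthomx_spectralP := hermitian_normalmx A_herm.
rewrite invmx_unitary ?spectral_unitarymx //.
set P := spectralmx A; set d := spectral_diag A => A_eq.
have PtP : P^t* *m P = 1%:M.
  by rewrite -invmx_unitary ?spectral_unitarymx // mulVmx ?spectral_unit.
pose y := x *m P^t*.
have yt : y^t* = P *m x^t* by rewrite /y trmx_mul map_mxM trmxCK.
have -> : x *m A *m x^t* = y *m diag_mx d *m y^t* by rewrite yt A_eq !mulmxA.
have -> : x *m x^t* = y *m y^t* by rewrite yt mulmxA -(mulmxA x) PtP mulmx1.
rewrite mul_mx_diag !mxE mulr_sumr; apply: ler_sum => j _; rewrite !mxE.
rewrite mulrAC [r * _]mulrC.
by apply: ler_wpM2l; [exact: mul_conjC_ge0 | exact: d_le].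
Qed.

End HermitianSpectral.

Section RealSymmetric.
Context {R : rcfType}.
Local Open Scope sesquilinear_scope.
Local Notation emb := (real_complex R).

Lemma complexified_realmx m n (A : 'M[R]_(m, n)) : map_mx emb A \is a realmx.
Proof. by apply/mxOverP => i j; rewrite mxE complex_real. Qed.

Lemma qform_complexified n (x : 'rV[R]_n) (A : 'M[R]_n) :
  (qform x A)%:C%C = (map_mx emb x *m map_mx emb A *m (map_mx emb x)^t*) 0 0.
Proof. by rewrite map_trmx realmxC ?complexified_realmx // -!map_mxM mxE. Qed.

Lemma symmx_rayleigh n (A : 'M[R]_n.+1) : A^T = A ->
  exists2 r, eigenvalue A r & forall x, qform x A <= r * qform x 1%:M.
Proof.
move=> A_sym; have A_herm : map_mx emb A \is hermsymmx.
  apply: realsym_hermsym; last exact: complexified_realmx.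
  by apply/is_hermitianmxP; rewrite expr0 scale1r map_mx_id // map_trmx A_sym.
pose d := spectral_diag (map_mx emb A).
have d_real i : d 0 i = (complex.Re (d 0 i))%:C%C.
  by rewrite RRe_real // (mxOverP (hermitian_spectral_diag_real A_herm)).
have [i0 _ d_max] := @arg_maxP _ _ _ ord0 xpredT (fun i => complex.Re (d 0 i)) isT.
exists (complex.Re (d 0 i0)).
  have := spectral_diag_eigenvalue _ _ i0 (hermitian_normalmx A_herm).
  by rewrite -/d d_real (eigenvalue_map emb A).
move=> x; rewrite -lecR rmorphM /= !qform_complexified map_mx1 mulmx1.
by apply: hermitian_rayleigh => // i; rewrite d_real lecR; exact: d_max.
Qed.

End RealSymmetric.

Lemma lambda_max_symmx {R : realType} {n} {A : 'M[R]_n.+1} : A^T = A ->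
  eigenvalue A (lambda_max A) /\ forall x, qform x A <= lambda_max A * qform x 1%:M.
Proof.
move=> /symmx_rayleigh [r r_eigen rayleigh].
suff -> : lambda_max A = r by [].
apply/le_anti/andP; split.
  by apply: ge_sup => [|a]; [exists r | exact: eigenvalue_le_rayleigh].
apply: sup_upper_bound => //; split; first by exists r.
by exists r => a; exact: eigenvalue_le_rayleigh.
Qed.

Section Convexity.
Context {R : realFieldType}.

Lemma convex_comb_gt0 {a b t : R} : 0 < a -> 0 < b -> 0 <= t <= 1 ->
  0 < t * a + (1 - t) * b.
Proof. by move=> a_gt0 b_gt0 /andP[t_ge0 t_le1]; nra. Qed.

Lemma perspective_sqr_convex (u1 u2 s1 s2 t : R) : 0 < s1 -> 0 < s2 -> 0 <= t <= 1 ->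
  (t * u1 + (1 - t) * u2) ^+ 2 / (t * s1 + (1 - t) * s2)
  <= t * (u1 ^+ 2 / s1) + (1 - t) * (u2 ^+ 2 / s2).
Proof.
move=> s1_gt0 s2_gt0 t01; have s_gt0 := convex_comb_gt0 s1_gt0 s2_gt0 t01.
have /andP[t_ge0 t_le1] := t01; rewrite -subr_ge0.
have -> : t * (u1 ^+ 2 / s1) + (1 - t) * (u2 ^+ 2 / s2)
    - (t * u1 + (1 - t) * u2) ^+ 2 / (t * s1 + (1 - t) * s2)
    = t * (1 - t) * (u1 * s2 - u2 * s1) ^+ 2
      / (s1 * s2 * (t * s1 + (1 - t) * s2)).
  by field; rewrite !gt_eqF.
apply: divr_ge0; first by rewrite mulr_ge0 ?sqr_ge0 // mulr_ge0 // subr_ge0.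
by rewrite ltW // !mulr_gt0.
Qed.

(* The quadratic form of the inverse of the correlation matrix [[1, rho], [rho, 1]]. *)
Definition invcorr_form (rho a b : R) : R :=
  (a ^+ 2 - 2 * rho * a * b + b ^+ 2) / (1 - rho ^+ 2).

Lemma invcorr_formE (rho a b : R) : -1 < rho < 1 ->
  invcorr_form rho a b
  = (a + b) ^+ 2 / (2 * (1 + rho)) + (a - b) ^+ 2 / (2 * (1 - rho)).
Proof.
move=> /andP[rho_gtN1 rho_lt1]; rewrite /invcorr_form.
have rhoD_neq0 : 1 + rho != 0 by rewrite gt_eqF //; lra.
have rhoB_neq0 : 1 - rho != 0 by rewrite gt_eqF //; lra.
have rho2_neq0 : 1 - rho ^+ 2 != 0 by rewrite gt_eqF //; nra.
by field; rewrite rhoD_neq0 rhoB_neq0 rho2_neq0.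
Qed.

Lemma invcorr_form_convex (r1 r2 a1 a2 b1 b2 t : R) :
  -1 < r1 < 1 -> -1 < r2 < 1 -> 0 <= t <= 1 ->
  invcorr_form (t * r1 + (1 - t) * r2) (t * a1 + (1 - t) * a2) (t * b1 + (1 - t) * b2)
  <= t * invcorr_form r1 a1 b1 + (1 - t) * invcorr_form r2 a2 b2.
Proof.
move=> r1_bd r2_bd t01.
have r_bd : -1 < t * r1 + (1 - t) * r2 < 1.
  move: r1_bd r2_bd => /andP[r1_gtN1 r1_lt1] /andP[r2_gtN1 r2_lt1].
  have lo : 0 < t * (1 + r1) + (1 - t) * (1 + r2).
    by apply: convex_comb_gt0 => //; lra.
  have hi : 0 < t * (1 - r1) + (1 - t) * (1 - r2).
    by apply: convex_comb_gt0 => //; lra.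
  by apply/andP; split; lra.
rewrite !invcorr_formE //.
have sum_comb : t * a1 + (1 - t) * a2 + (t * b1 + (1 - t) * b2)
    = t * (a1 + b1) + (1 - t) * (a2 + b2) by ring.
have diff_comb : t * a1 + (1 - t) * a2 - (t * b1 + (1 - t) * b2)
    = t * (a1 - b1) + (1 - t) * (a2 - b2) by ring.
have plus_comb : 2 * (1 + (t * r1 + (1 - t) * r2))
    = t * (2 * (1 + r1)) + (1 - t) * (2 * (1 + r2)) by ring.
have minus_comb : 2 * (1 - (t * r1 + (1 - t) * r2))
    = t * (2 * (1 - r1)) + (1 - t) * (2 * (1 - r2)) by ring.
rewrite sum_comb diff_comb plus_comb minus_comb.
apply: le_trans (lerD (perspective_sqr_convex _ _ _ _ _ _ _ t01)
                     (perspective_sqr_convex _ _ _ _ _ _ _ t01)) _; lra.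
Qed.

End Convexity.

Section MatrixMz.
Context {R : realType} {n : nat}.

Lemma trmx_otimes (a b : 'cV[R]_n) : (otimes a b)^T = otimes b a.
Proof. by rewrite /otimes trmx_mul trmxK. Qed.

Lemma Mz_sym {z : Zpt R n} : (zsigma z)^T = zsigma z -> (Mz z)^T = Mz z.
Proof.
move=> sigma_sym; rewrite /Mz linearB linearZ /= sigma_sym.
congr (_ *: _ - _); rewrite linearD linearB linearZ linearD /= !trmx_otimes.
by congr (_ - _ *: _ + _); rewrite addrC.
Qed.

Lemma zcomb_sigma_sym t {z1 z2 : Zpt R n} :
  (zsigma z1)^T = zsigma z1 -> (zsigma z2)^T = zsigma z2 ->
  (zsigma (zcomb t z1 z2))^T = zsigma (zcomb t z1 z2).
Proof. by move=> sym1 sym2; rewrite /= linearD !linearZ /= sym1 sym2. Qed.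

Lemma mulmx_comb (x : 'rV[R]_n) t (a b : 'cV[R]_n) :
  (x *m (t *: a + (1 - t) *: b)) 0 0 = t * (x *m a) 0 0 + (1 - t) * (x *m b) 0 0.
Proof. by rewrite mulmxDr -!scalemxAr !mxE. Qed.

Lemma qform_Mz (x : 'rV[R]_n) (z : Zpt R n) :
  qform x (Mz z)
  = invcorr_form (zrho z) ((x *m zv z) 0 0) ((x *m zm z) 0 0) - qform x (zsigma z).
Proof.
rewrite /Mz /otimes qformB qformZ qformD qformB qformZ qformD !qform_otimes.
by rewrite /invcorr_form mulrC; congr (_ * _ - _); ring.
Qed.

Lemma qform_Mz_convex (x : 'rV[R]_n) t (z1 z2 : Zpt R n) :
  -1 < zrho z1 < 1 -> -1 < zrho z2 < 1 -> 0 <= t <= 1 ->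
  qform x (Mz (zcomb t z1 z2)) <= t * qform x (Mz z1) + (1 - t) * qform x (Mz z2).
Proof.
move=> rho1 rho2 t01; rewrite !qform_Mz /= !mulmx_comb qformD !qformZ.
have := invcorr_form_convex _ _ ((x *m zv z1) 0 0) ((x *m zv z2) 0 0)
  ((x *m zm z1) 0 0) ((x *m zm z2) 0 0) _ rho1 rho2 t01.
lra.
Qed.

End MatrixMz.

Theorem lemma3p7 (R : realType) (n : nat) (hn : (2 <= n)%N)
  (z1 z2 : Zpt R n) (t : R) :
  inZ0 z1 -> inZ0 z2 -> 0 <= t <= 1 ->
  Q (zcomb t z1 z2) <= t * Q z1 + (1 - t) * Q z2.
Proof.
case: n hn z1 z2 => [//|n] _ z1 z2 [rho1 sym1 _] [rho2 sym2 _] t01.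
have [eigen_c _] := lambda_max_symmx (Mz_sym (zcomb_sigma_sym t sym1 sym2)).
have [_ rayleigh1] := lambda_max_symmx (Mz_sym sym1).
have [_ rayleigh2] := lambda_max_symmx (Mz_sym sym2).
have /andP[t_ge0 t_le1] := t01.
have /eigenvalueP [x xM x_neq0] := eigen_c.
rewrite /Q -(ler_pM2r (qform_norm_gt0 x x_neq0)) -(qform_eigen _ _ _ xM).
apply: le_trans (qform_Mz_convex x t z1 z2 rho1 rho2 t01) _.
by rewrite [leRHS]mulrDl -!mulrA lerD ?ler_wpM2l ?subr_ge0.
Qed.
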